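(* The family $\mathcal S$ of SIP sets is not a filterdual; that is, there exist sets $A_1,A_2\subset\mathbb N$ such that $A_1\cup A_2$ is an SIP set but neither $A_1$ nor $A_2$ is an SIP set.
   Context: $\mathbb N=\{1,2,\dots\}$. For a finite set $F\subset\mathbb Z$, $\sigma_F$ is the sum of its elements ($\sigma_\emptyset=0$). For $A\subset\mathbb Z$: $IP(A)=\{\sigma_F:F\subset A\text{ finite}\}$ and $SIP(A)=\{a-b:a,b\in IP(A)\}$. A set $B\subset\mathbb N$ is an SIP set if there exists an infinite $A\subset\mathbb N$ with $SIP(A)\cap\mathbb N\subset B$. A family $\mathcal F$ of subsets of $\mathbb N$ (closed under taking supersets) is a filterdual if $A_1\cup A_2\in\mathcal F$ implies $A_1\in\mathcal F$ or $A_2\in\mathcal F$. *)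

(* Subsets of Z (and of N = {1,2,...} viewed inside Z) are predicates Z -> Prop. *)
From Stdlib Require Import ZArith List.
Import ListNotations.
Open Scope Z_scope.

Definition subset_N (B : Z -> Prop) : Prop := forall x, B x -> 0 < x.

(* sigma_F for a finite set F given by a duplicate-free list *)
Definition sigma (F : list Z) : Z := fold_right Z.add 0 F.

(* IP(A) = { sigma_F : F subset A finite } (F = empty allowed, giving 0) *)
Definition IP (A : Z -> Prop) (x : Z) : Prop :=
  exists F : list Z, NoDup F /\ (forall y, In y F -> A y) /\ x = sigma F.

Definition SIP (A : Z -> Prop) (x : Z) : Prop :=
  exists a b, IP A a /\ IP A b /\ x = a - b.

Definition infinite_set (A : Z -> Prop) : Prop :=
  forall n : Z, exists x, A x /\ n < x.

Definition SIP_set (B : Z -> Prop) : Prop :=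
  exists A : Z -> Prop, subset_N A /\ infinite_set A /\
    (forall x, SIP A x -> 0 < x -> B x).

(** Colour [n = 2^v m] ([m] odd) by the parity of [v] xor [m ≡ 3 (mod 4)].
    The two colour classes partition [N], which is trivially an SIP set.
    If [x < y] lie in a set [A] with [SIP(A) ∩ N] monochromatic, then [x], [y],
    [x + y], [y - x] share a colour; comparing colours forces the 2-adic
    valuation of [y] to be at most that of [x], and when they agree the odd
    parts differ by 4 mod 8.  An infinite [A] then contains three elements of
    equal valuation whose odd parts pairwise differ by 4 mod 8, which is
    impossible since 4 + 4 ≢ 4 (mod 8). *)

From Stdlib Require Import ZArith List Lia.
Import ListNotations.
Open Scope Z_scope.

Ltac zlia := Z.div_mod_to_equations; lia.

Fixpoint pos_val2 (p : positive) : nat :=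
  match p with xO q => S (pos_val2 q) | _ => O end.

Fixpoint pos_odd_part (p : positive) : positive :=
  match p with xO q => pos_odd_part q | _ => p end.

Definition val2 (n : Z) : nat :=
  match n with Zpos p => pos_val2 p | _ => O end.

Definition odd_part (n : Z) : Z :=
  match n with Zpos p => Zpos (pos_odd_part p) | _ => n end.

Definition colour (n : Z) : bool :=
  xorb (Nat.odd (val2 n)) (odd_part n mod 4 =? 3).

Definition colour_class (c : bool) (n : Z) : Prop := 0 < n /\ colour n = c.

Lemma odd_part_spec (n : Z) :
  0 < n -> 0 < odd_part n /\ odd_part n mod 2 = 1 /\ n = 2 ^ Z.of_nat (val2 n) * odd_part n.
Proof.
  destruct n as [|p|p]; try lia; intros _; cbn [val2 odd_part].
  induction p as [q _|q IHq|]; cbn [pos_val2 pos_odd_part].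
  - rewrite Pos2Z.inj_xI; zlia.
  - destruct IHq as (Hpos & Hodd & Hq).
    change (Z.pos q~0) with (2 * Z.pos q).
    rewrite Nat2Z.inj_succ, Z.pow_succ_r, Hq by lia.
    repeat split; trivial; ring.
  - repeat split; reflexivity.
Qed.

Lemma val2_pow2_mul (a : nat) (r : Z) :
  0 < r -> r mod 2 = 1 -> val2 (2 ^ Z.of_nat a * r) = a /\ odd_part (2 ^ Z.of_nat a * r) = r.
Proof.
  intros Hr Hodd; induction a as [|a [IHv IHo]].
  - rewrite Z.mul_1_l.
    destruct r as [|[q|q|]|]; try lia; try (split; reflexivity).
    change (Z.pos q~0) with (2 * Z.pos q) in Hodd; zlia.
  - rewrite Nat2Z.inj_succ, Z.pow_succ_r, <- Z.mul_assoc by lia.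
    assert (Hpos : 0 < 2 ^ Z.of_nat a * r) by (apply Z.mul_pos_pos; lia).
    destruct (2 ^ Z.of_nat a * r) as [|q|q]; try lia.
    split; [simpl in *; congruence | exact IHo].
Qed.

Lemma colour_pow2_mul (a : nat) (r : Z) :
  0 < r -> r mod 2 = 1 -> colour (2 ^ Z.of_nat a * r) = xorb (Nat.odd a) (r mod 4 =? 3).
Proof.
  intros Hr Hodd; unfold colour.
  destruct (val2_pow2_mul a r Hr Hodd) as [-> ->]; reflexivity.
Qed.

Lemma colour_pow2_mul_shift2 (a : nat) (p q : Z) :
  0 < p -> p mod 2 = 1 -> 0 < q -> q mod 4 = (p + 2) mod 4 ->
  colour (2 ^ Z.of_nat a * q) <> colour (2 ^ Z.of_nat a * p).
Proof.
  intros Hp Hpodd Hq Hpq.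
  rewrite !colour_pow2_mul by (trivial; zlia).
  destruct (Z.eqb_spec (p mod 4) 3), (Z.eqb_spec (q mod 4) 3), (Nat.odd a);
    try zlia; discriminate.
Qed.

Section MonochromaticPair.

Variables (x y : Z).
Hypotheses (Hx : 0 < x) (Hxy : x < y).
Hypotheses (Hy_col : colour y = colour x) (Hsum_col : colour (x + y) = colour x)
  (Hdiff_col : colour (y - x) = colour x).

Lemma monochromatic_pair_val2_le : (val2 y <= val2 x)%nat.
Proof.
  destruct (odd_part_spec x Hx) as (Hp & Hpodd & Ex).
  destruct (odd_part_spec y ltac:(lia)) as (Hq & Hqodd & Ey).
  set (a := val2 x) in *; set (b := val2 y) in *.
  set (p := odd_part x) in *; set (q := odd_part y) in *.
  assert (Ha : 0 < 2 ^ Z.of_nat a) by (apply Z.pow_pos_nonneg; lia).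
  destruct (Nat.le_gt_cases b a) as [|Hab]; trivial; exfalso.
  destruct (Nat.eq_dec b (S a)) as [Hb|Hb].
  - (* [x + y = 2^a (p + 2q)] and [p + 2q ≡ p + 2 (mod 4)] *)
    assert (Hsum : x + y = 2 ^ Z.of_nat a * (p + 2 * q)).
    { rewrite Ex, Ey, Hb, Nat2Z.inj_succ, Z.pow_succ_r by lia; ring. }
    apply (colour_pow2_mul_shift2 a p (p + 2 * q)); try zlia.
    rewrite <- Hsum, <- Ex; exact Hsum_col.
  - (* [y - x = 2^a (4K - p)] and [4K - p ≡ p + 2 (mod 4)] *)
    set (K := 2 ^ Z.of_nat (b - S (S a)) * q).
    assert (Hdiff : y - x = 2 ^ Z.of_nat a * (4 * K - p)).
    { replace b with (a + 2 + (b - S (S a)))%nat in Ey by lia.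
      rewrite Ex, Ey, !Nat2Z.inj_add, !Z.pow_add_r by lia; unfold K.
      change (2 ^ Z.of_nat 2) with 4; ring. }
    apply (colour_pow2_mul_shift2 a p (4 * K - p)); try zlia.
    + nia.
    + rewrite <- Hdiff, <- Ex; exact Hdiff_col.
Qed.

Lemma monochromatic_pair_odd_part :
  val2 y = val2 x -> (odd_part x - odd_part y) mod 8 = 4.
Proof.
  intros Hab.
  destruct (odd_part_spec x Hx) as (Hp & Hpodd & Ex).
  destruct (odd_part_spec y ltac:(lia)) as (Hq & Hqodd & Ey).
  rewrite Hab in Ey.
  set (a := val2 x) in *; set (p := odd_part x) in *; set (q := odd_part y) in *.
  assert (Hpq : p mod 4 = q mod 4).
  { destruct (Z.eq_dec (p mod 4) (q mod 4)) as [|Hne]; trivial; exfalso.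
    apply (colour_pow2_mul_shift2 a p q); try zlia.
    rewrite <- Ey, <- Ex; exact Hy_col. }
  destruct (Z.eq_dec ((p - q) mod 8) 4) as [|Hne]; trivial; exfalso.
  (* otherwise [x + y = 2^(a+1) m] with odd [m = (p + q)/2 ≡ p (mod 4)] *)
  set (m := (p + q) / 2).
  assert (Hm : p + q = 2 * m) by (unfold m; zlia).
  clearbody m.
  assert (Hsum : x + y = 2 ^ Z.of_nat (S a) * m).
  { rewrite Ex, Ey, Nat2Z.inj_succ, Z.pow_succ_r, <- Z.mul_add_distr_l, Hm by lia.
    ring. }
  rewrite Hsum, Ex, !colour_pow2_mul, Nat.odd_succ, <- Nat.negb_odd in Hsum_col
    by zlia.
  destruct (Z.eqb_spec (p mod 4) 3), (Z.eqb_spec (m mod 4) 3), (Nat.odd a);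
    try zlia; discriminate.
Qed.

End MonochromaticPair.

Lemma no_infinite_descent (A : Z -> Prop) (v : Z -> nat) (r : Z -> Z) :
  infinite_set A ->
  (forall x y, A x -> A y -> x < y ->
     (v y <= v x)%nat /\ (v y = v x -> (r x - r y) mod 8 = 4)) ->
  False.
Proof.
  intros Hinf Hstep.
  assert (Hbound : forall n x, A x -> (v x < n)%nat -> False).
  { induction n as [|n IHn]; intros x Ax Hx; [lia|].
    destruct (Hinf x) as (y & Ay & Hxy).
    destruct (Hstep x y Ax Ay Hxy) as [Hyx Hxy_mod].
    destruct (Nat.eq_dec (v y) (v x)) as [Eyx|]; [|apply (IHn y); trivial; lia].
    destruct (Hinf y) as (z & Az & Hyz).
    destruct (Hstep y z Ay Az Hyz) as [Hzy Hyz_mod].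
    destruct (Nat.eq_dec (v z) (v y)) as [Ezy|]; [|apply (IHn z); trivial; lia].
    destruct (Hstep x z Ax Az ltac:(lia)) as [_ Hxz_mod].
    specialize (Hxy_mod Eyx); specialize (Hyz_mod Ezy);
      specialize (Hxz_mod ltac:(lia)); zlia. }
  destruct (Hinf 0) as (x & Ax & _).
  exact (Hbound (S (v x)) x Ax (Nat.lt_succ_diag_r _)).
Qed.

Lemma IP_nil (A : Z -> Prop) : IP A 0.
Proof. exists []; repeat split; [constructor | intros y []]. Qed.

Lemma IP_singleton (A : Z -> Prop) (x : Z) : A x -> IP A x.
Proof.
  intros Ax; exists [x]; repeat split.
  - repeat constructor; intros [].
  - intros y [<-|[]]; exact Ax.
  - simpl; ring.
Qed.

Lemma IP_pair (A : Z -> Prop) (x y : Z) : A x -> A y -> x <> y -> IP A (x + y).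
Proof.
  intros Ax Ay Hxy; exists [x; y]; repeat split.
  - repeat constructor; simpl; intuition.
  - intros z [<-|[<-|[]]]; trivial.
  - simpl; ring.
Qed.

Lemma SIP_of_IP (A : Z -> Prop) (x : Z) : IP A x -> SIP A x.
Proof. intros Hx; exists x, 0; repeat split; trivial; [apply IP_nil | ring]. Qed.

Lemma SIP_sub (A : Z -> Prop) (x y : Z) : A x -> A y -> SIP A (y - x).
Proof. intros Ax Ay; exists y, x; repeat split; apply IP_singleton; trivial. Qed.

Lemma SIP_set_pair (B : Z -> Prop) (A : Z -> Prop) (x y : Z) :
  subset_N A -> (forall n, SIP A n -> 0 < n -> B n) -> A x -> A y -> x < y ->
  B x /\ B y /\ B (x + y) /\ B (y - x).
Proof.
  intros HA HB Ax Ay Hxy.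
  pose proof (HA x Ax); pose proof (HA y Ay).
  repeat split; apply HB; try lia.
  - apply SIP_of_IP, IP_singleton; trivial.
  - apply SIP_of_IP, IP_singleton; trivial.
  - apply SIP_of_IP, IP_pair; trivial; lia.
  - apply SIP_sub; trivial.
Qed.

Lemma colour_class_not_SIP_set (c : bool) : ~ SIP_set (colour_class c).
Proof.
  intros (A & HA & Hinf & HB).
  apply (no_infinite_descent A val2 odd_part Hinf).
  intros x y Ax Ay Hxy.
  destruct (SIP_set_pair _ A x y HA HB Ax Ay Hxy)
    as ([Hx Cx] & [_ Cy] & [_ Csum] & [_ Cdiff]).
  split.
  - apply monochromatic_pair_val2_le; congruence.
  - apply monochromatic_pair_odd_part; congruence.
Qed.

Lemma positives_SIP_set : SIP_set (fun n => 0 < n).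
Proof.
  exists (fun n => 0 < n); repeat split.
  - intros n Hn; exact Hn.
  - intros n; exists (Z.abs n + 1); lia.
  - intros n _ Hn; exact Hn.
Qed.

Theorem theorem3p5 :
  exists A1 A2 : Z -> Prop,
    subset_N A1 /\ subset_N A2 /\
    SIP_set (fun x => A1 x \/ A2 x) /\ ~ SIP_set A1 /\ ~ SIP_set A2.
Proof.
  exists (colour_class false), (colour_class true); repeat split.
  - intros n [Hn _]; exact Hn.
  - intros n [Hn _]; exact Hn.
  - destruct positives_SIP_set as (A & HA & Hinf & HB).
    exists A; repeat split; trivial.
    intros n Hsip Hn; specialize (HB n Hsip Hn).
    destruct (colour n) eqn:E; [right | left]; split; trivial.
  - apply colour_class_not_SIP_set.
  - apply colour_class_not_SIP_set.
Qed.
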